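(* Let $Q=(q_n)_{n\ge1}$ be a basic sequence that is infinite in limit. Then the set $\Theta_Q$ is perfect.
   Context: A basic sequence is a sequence $Q=(q_n)_{n\ge1}$ of integers with $q_n\ge 2$; it is infinite in limit if $q_n\to\infty$. $\mathbb{N}$ denotes the positive integers. For each positive integer $j$ let $\nu_j=\min\{N : q_m\ge 2j^2 \text{ for all } m\ge N\}$. Define $l_1=\max(\nu_2-1,1)$ and, recursively for $i\ge 2$, $l_i=\max\big(\min\{k\in\mathbb{N} : l_1+2l_2+\cdots+(i-1)l_{i-1}+ik\ge \nu_{i+1}-1\},1\big)$. Put $L_i=\sum_{j=1}^i jl_j$ (with $L_0=0$). Let $S_Q=\{(a,b,c)\in\mathbb{N}^3 : b\le l_a,\ c\le a\}$ and $\phi_Q(a,b,c)=L_{a-1}+(b-1)a+c$; $\phi_Q$ is a bijection $S_Q\to\mathbb{N}$. A $Q$-special sequence is a family of integers $F=(F_{(a,b,c)})_{(a,b,c)\in S_Q}$ with $F_{(a,b,1)}=0$ for all $(a,b,1)\in S_Q$ and $\frac{F_{(a,b,c)}}{q_{\phi_Q(a,b,c)}}\in\left[\frac{c-1}{a}-\frac{1}{2a^2},\frac{c-1}{a}+\frac{1}{2a^2}\right]$ for $(a,b,c)\in S_Q$ with $c>1$. Let $\Gamma_Q$ be the set of $Q$-special sequences. For $F\in\Gamma_Q$ put $E_{F,n}=F_{\phi_Q^{-1}(n)}$ and $x_F=\sum_{n=1}^\infty \frac{E_{F,n}}{q_1q_2\cdots q_n}$. Define $\Theta_Q=\{x_F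 : F\in\Gamma_Q\}\subseteq[0,1)$. *)

From HB Require Import structures.
From mathcomp Require Import all_boot all_order all_algebra.
From mathcomp Require Import all_classical all_reals all_analysis.
From mathcomp Require Import zify.
Set Implicit Arguments. Unset Strict Implicit. Unset Printing Implicit Defensive.
Import Order.TTheory GRing.Theory Num.Theory.
Import numFieldNormedType.Exports.
Local Open Scope classical_set_scope.
Local Open Scope ring_scope.

(* A sequence q : nat -> nat; only the values q n for n >= 1 are used. *)

Definition basic_seq (q : nat -> nat) : Prop := forall n, (1 <= n)%N -> (2 <= q n)%N.

Definition infinite_in_limit (q : nat -> nat) : Prop :=
  forall M : nat, exists N : nat, forall n, (N <= n)%N -> (M <= q n)%N.

Definition nu_pred (q : nat -> nat) (j : nat) : pred nat :=
  fun N => (0 < N)%N && `[< forall m, (N <= m)%N -> (2 * j ^ 2 <= q m)%N >].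

(* nu_j = min { N in N : q_m >= 2 j^2 for all m >= N }  (0 if no such N) *)
Definition nu (q : nat -> nat) (j : nat) : nat :=
  match pselect (exists N, nu_pred q j N) with
  | left h => ex_minn h
  | right _ => 0%N
  end.

(* for i = i'.+1 : predicate { k in N : Lprev + i * k >= nu_{i+1} - 1 } *)
Definition lstep_pred (Lprev i nv : nat) : pred nat :=
  fun k => (0 < k)%N && (nv - 1 <= Lprev + i * k)%N.

Lemma lstep_ex (Lprev i' nv : nat) : exists k, lstep_pred Lprev i'.+1 nv k.
Proof.
exists nv.+1; rewrite /lstep_pred /=; lia.
Qed.

(* l_i computed from i' = i - 1 and Lprev = L_{i-1} *)
Definition lfun (q : nat -> nat) (i' Lprev : nat) : nat :=
  if i' == 0%N then maxn (nu q 2 - 1) 1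
  else maxn (ex_minn (lstep_ex Lprev i' (nu q i'.+2))) 1.

Fixpoint Lsum (q : nat -> nat) (i : nat) : nat :=
  match i with
  | 0 => 0%N
  | i'.+1 => (Lsum q i' + i'.+1 * lfun q i' (Lsum q i'))%N
  end.

Definition l_ (q : nat -> nat) (i : nat) : nat := lfun q i.-1 (Lsum q i.-1).

Definition S_Q (q : nat -> nat) : set (nat * nat * nat) :=
  [set t | let: (a, b, c) := t in
           [/\ (1 <= a)%N, (1 <= b)%N, (1 <= c)%N, (b <= l_ q a)%N & (c <= a)%N]].

Definition phi_Q (q : nat -> nat) (t : nat * nat * nat) : nat :=
  let: (a, b, c) := t in (Lsum q a.-1 + (b - 1) * a + c)%N.

Definition phi_inv (q : nat -> nat) (n : nat) : nat * nat * nat :=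
  xget (0, 0, 0)%N [set t | S_Q q t /\ phi_Q q t = n].

(* Q-special sequences; a family indexed by S_Q is represented by a function
   on triples, whose values outside S_Q are irrelevant. *)
Definition Q_special {R : realType} (q : nat -> nat)
    (F : nat * nat * nat -> int) : Prop :=
  forall a b c, S_Q q (a, b, c) ->
    if c == 1%N then F (a, b, c) = 0
    else ((F (a, b, c))%:~R / (q (phi_Q q (a, b, c)))%:R : R)
           \in `[ (c - 1)%:R / a%:R - 1 / (2 * (a%:R) ^+ 2),
                  (c - 1)%:R / a%:R + 1 / (2 * (a%:R) ^+ 2) ].

Definition E_F (q : nat -> nat) (F : nat * nat * nat -> int) (n : nat) : int :=
  F (phi_inv q n).

Definition x_F {R : realType} (q : nat -> nat) (F : nat * nat * nat -> int) : R :=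
  limn (fun N : nat =>
    \sum_(1 <= n < N) ((E_F q F n)%:~R / (\prod_(1 <= k < n.+1) (q k)%:R)) : R).

Definition Theta_Q {R : realType} (q : nat -> nat) : set R :=
  [set x | exists F, @Q_special R q F /\ x = x_F q F].

(* Reading off the digits E_{F,n} identifies Theta_Q with the set of sums of
   Cantor series sum_n e_n / (q_1 ... q_n) whose n-th digit ranges over a finite
   window of integers, namely those d with d / q_n close to (c - 1) / a, where
   phi_Q(a, b, c) = n.  The choice of the l_i forces q_n >= 2 a^2, which puts the
   window inside [0, q_n - 2] and makes it contain two consecutive integers when
   c > 1.  Digits at most q_n - 2 leave a gap of one unit of the n-th place after
   every tail, so two sums agreeing up to n are 1 / (q_1 ... q_n)-close and a sum
   is strictly monotone in the first digit where sequences differ.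
   Closedness: since every window is finite, for x in the closure one can choose
   digit after digit so that x stays in the closure of the points with that
   prefix; the resulting digit sequence sums to x.  No point is isolated: change
   one digit far out, at a position with c > 1, to a neighbouring admissible
   value. *)

From HB Require Import structures.
From mathcomp Require Import all_boot all_order all_algebra.
From mathcomp Require Import all_classical all_reals all_analysis.
From mathcomp Require Import zify ring lra.
Import numFieldNormedType.Exports.
Set Implicit Arguments. Unset Strict Implicit. Unset Printing Implicit Defensive.
Import Order.TTheory GRing.Theory Num.Theory.
Local Open Scope classical_set_scope.

Section PhiBijection.
Variable q : nat -> nat.

Lemma l_gt0 a : (0 < l_ q a)%N.
Proof. by rewrite /l_ /lfun; case: ifP => _; rewrite leq_max orbT. Qed.

Lemma LsumS a : Lsum q a.+1 = (Lsum q a + a.+1 * l_ q a.+1)%N.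
Proof. by []. Qed.

Lemma leq_Lsum a b : (a <= b)%N -> (Lsum q a <= Lsum q b)%N.
Proof.
move=> /subnK <-; elim: (b - a)%N => [|k IH] //=.
exact: leq_trans IH (leq_addr _ _).
Qed.

Lemma leq_Lsum_id a : (a <= Lsum q a)%N.
Proof. by elim: a => [|a IH] //; rewrite LsumS; have := l_gt0 a.+1; nia. Qed.

Lemma phi_Q_bounds a b c : S_Q q (a, b, c) ->
  (Lsum q a.-1 < phi_Q q (a, b, c) <= Lsum q a)%N.
Proof.
case; case: a => [|a] // _ b1 c1 bl ca; rewrite /phi_Q LsumS /=.
have : (b * a.+1 <= l_ q a.+1 * a.+1)%N by rewrite leq_mul2r bl orbT.
have : ((b - 1) * a.+1 + a.+1 = b * a.+1)%N by rewrite -mulSnr subn1 prednK.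
rewrite [(a.+1 * _)%N]mulnC; nia.
Qed.

Lemma phi_Q_inj : {in S_Q q &, injective (phi_Q q)}.
Proof.
move=> [[a b] c] [[a' b'] c'] /[!inE] St St' E.
have /andP[lo hi] := phi_Q_bounds St; have /andP[lo' hi'] := phi_Q_bounds St'.
have [a1 b1 c1 _ ca] := St; have [a1' b1' c1' _ ca'] := St'.
have ea : a' = a.
  apply/eqP; rewrite eqn_leq; apply/andP; split; rewrite leqNgt; apply/negP => lt.
  - by have := leq_Lsum (_ : (a <= a'.-1)%N); lia.
  - by have := leq_Lsum (_ : (a' <= a.-1)%N); lia.
subst a'; move: E {lo hi lo' hi'}; rewrite /phi_Q => E.
have eb : b' = b.
  apply/eqP; rewrite eqn_leq; apply/andP; split; rewrite leqNgt; apply/negP => lt.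
  - have : ((b - 1) * a + a <= (b' - 1) * a)%N by rewrite -mulSnr leq_mul2r; lia.
    by move: E; move: ((b - 1) * a)%N ((b' - 1) * a)%N; lia.
  - have : ((b' - 1) * a + a <= (b - 1) * a)%N by rewrite -mulSnr leq_mul2r; lia.
    by move: E; move: ((b - 1) * a)%N ((b' - 1) * a)%N; lia.
by subst b'; congr (_, _, _); lia.
Qed.

Lemma phi_Q_surj n : (0 < n)%N -> exists t, S_Q q t /\ phi_Q q t = n.
Proof.
move=> n0; have ex : exists a, (n <= Lsum q a)%N by exists n; exact: leq_Lsum_id.
case: (ex_minnP ex) => -[|a] na amin; first by move: na; rewrite leqn0; lia.
have lt : (Lsum q a < n)%N by rewrite ltnNge; apply/negP => /amin; lia.
move: na; rewrite LsumS => na.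
pose r := (n - Lsum q a - 1)%N.
have rlt : (r < a.+1 * l_ q a.+1)%N by rewrite /r; nia.
exists (a.+1, (r %/ a.+1).+1, (r %% a.+1).+1); split.
  by rewrite /S_Q /=; split; rewrite // ?ltn_pmod // ltn_divLR // mulnC.
by rewrite /phi_Q /= subn1 /=; have := divn_eq r a.+1; rewrite /r; nia.
Qed.

Lemma phi_invP n : (0 < n)%N -> S_Q q (phi_inv q n) /\ phi_Q q (phi_inv q n) = n.
Proof.
by move=> /phi_Q_surj ex; exact: (xgetPex (0, 0, 0)%N ex).
Qed.

Lemma phi_Q_gt0 t : S_Q q t -> (0 < phi_Q q t)%N.
Proof. by case: t => [[a b] c] /phi_Q_bounds; lia. Qed.

Lemma phi_QK t : S_Q q t -> phi_inv q (phi_Q q t) = t.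
Proof.
move=> St; have [St' Et'] := phi_invP (phi_Q_gt0 St).
by apply: phi_Q_inj; rewrite ?inE.
Qed.

End PhiBijection.

Section QGrowth.
Variable q : nat -> nat.
Hypotheses (q_basic : basic_seq q) (q_infinite : infinite_in_limit q).

Lemma nu_q_ge j m : (nu q j <= m)%N -> (2 * j ^ 2 <= q m)%N.
Proof.
rewrite /nu; case: pselect => [h|[]].
  by case: (ex_minnP h) => N /andP[_ /asboolP H] _; exact: H.
have [N HN] := q_infinite (2 * j ^ 2).
exists N.+1; apply/andP; split => //; apply/asboolP => m' hm; apply: HN; lia.
Qed.

Lemma nu_le_Lsum a : (2 <= a)%N -> (nu q a - 1 <= Lsum q a.-1)%N.
Proof.
case: a => [|[|[|a]]] // _; first by rewrite /= /lfun /= add0n mul1n leq_maxl.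
rewrite [a.+3.-1]/= LsumS.
have -> : l_ q a.+2 = maxn (ex_minn (lstep_ex (Lsum q a.+1) a.+1 (nu q a.+3))) 1.
  by [].
case: (ex_minnP (lstep_ex (Lsum q a.+1) a.+1 (nu q a.+3))) => k /andP[_ hk] _.
have : (k <= maxn k 1)%N by rewrite leq_maxl.
nia.
Qed.

Lemma q_phi_ge a b c : S_Q q (a, b, c) -> (2 * a ^ 2 <= q (phi_Q q (a, b, c)))%N.
Proof.
move=> St; have := phi_Q_bounds St; case: St; case: a => [|[|a]] // _ _ _ _ _ hphi.
  by rewrite muln1; apply: q_basic; lia.
by apply: nu_q_ge; have := @nu_le_Lsum a.+2 isT; lia.
Qed.

End QGrowth.

Local Open Scope ring_scope.

Section CantorSeries.
Variables (R : realType) (q : nat -> nat).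
Hypothesis q_basic : basic_seq q.

Definition qprod n : R := \prod_(1 <= k < n.+1) (q k)%:R.

Definition cantor_partial (e : nat -> int) N : R :=
  \sum_(1 <= n < N) (e n)%:~R / qprod n.

Definition cantor_sum e := limn (cantor_partial e).

Definition cantor_digits (e : nat -> int) :=
  forall m, (0 < m)%N -> 0 <= e m /\ e m + 2 <= (q m)%:Z.

Lemma qprod0 : qprod 0 = 1.
Proof. by rewrite /qprod big_geq. Qed.

Lemma qprodS n : qprod n.+1 = qprod n * (q n.+1)%:R.
Proof. by rewrite /qprod big_nat_recr. Qed.

Lemma q_ge2 n : (0 < n)%N -> 2 <= (q n)%:R :> R.
Proof. by move=> /q_basic; rewrite (ler_nat R 2). Qed.

Lemma qprod_ge n : n.+1%:R <= qprod n.
Proof.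
elim: n => [|n IH]; first by rewrite qprod0.
rewrite qprodS -natr1; have := q_ge2 (ltn0Sn n).
have : 1 <= n.+1%:R :> R by rewrite ler1n.
nra.
Qed.

Lemma qprod_gt0 n : 0 < qprod n.
Proof. exact: lt_le_trans (qprod_ge n). Qed.

Lemma qprod_inv_lt (d : R) : 0 < d -> exists N, forall n, (N <= n)%N -> (qprod n)^-1 < d.
Proof.
move=> d0; exists (Num.truncn d^-1) => n Nn.
rewrite -(invrK d) ltf_pV2 ?posrE ?invr_gt0 ?qprod_gt0 //.
apply: lt_le_trans (truncnS_gt _) _; apply: le_trans (qprod_ge n).
by rewrite ler_nat.
Qed.

Lemma qprod_telescope n : ((q n.+1)%:R - 1) / qprod n.+1 = (qprod n)^-1 - (qprod n.+1)^-1.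
Proof.
rewrite qprodS; have := qprod_gt0 n; have := q_ge2 (ltn0Sn n).
by move=> *; field; apply/andP; split; rewrite gt_eqF //; lra.
Qed.

Lemma cantor_partialS e N : (0 < N)%N ->
  cantor_partial e N.+1 = cantor_partial e N + (e N)%:~R / qprod N.
Proof. by move=> N0; rewrite /cantor_partial big_nat_recr. Qed.

Section Digits.
Variable e : nat -> int.
Hypothesis e_digits : cantor_digits e.

Lemma cantor_term_ge0 m : (0 < m)%N -> 0 <= (e m)%:~R / qprod m.
Proof.
by move=> /e_digits[e0 _]; rewrite divr_ge0 ?ler0z // ltW // qprod_gt0.
Qed.

Lemma cantor_term_le m : (0 < m)%N ->
  (e m)%:~R / qprod m <= ((q m)%:R - 2) / qprod m.
Proof.
move=> /e_digits[_ e2]; rewrite ler_pM2r ?invr_gt0 ?qprod_gt0 //.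
have : (e m + 2)%:~R <= (q m)%:Z%:~R :> R by rewrite ler_int.
by rewrite intrD; lra.
Qed.

Lemma cantor_partial_tail n k :
  cantor_partial e (n.+1 + k) <= cantor_partial e n.+1 + (qprod n)^-1 - (qprod (n + k))^-1.
Proof.
elim: k => [|k IH]; first by rewrite !addn0; lra.
rewrite addnS cantor_partialS // addnS.
have := cantor_term_le (ltn0Sn (n + k)); have := qprod_telescope (n + k).
have : 0 < (qprod (n + k).+1)^-1 by rewrite invr_gt0 qprod_gt0.
rewrite !mulrBl mul1r addSn in IH *; lra.
Qed.

Lemma cantor_partial_nondecreasing : nondecreasing_seq (cantor_partial e).
Proof.
apply/nondecreasing_seqP => -[|N]; first by rewrite /cantor_partial !big_geq.
by rewrite (@cantor_partialS e N.+1) // lerDl cantor_term_ge0.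
Qed.

Lemma cantor_partial_le1 N : cantor_partial e N <= 1.
Proof.
case: N => [|N]; first by rewrite /cantor_partial big_geq.
have := cantor_partial_tail 0 N.
rewrite [cantor_partial e 1]/cantor_partial big_geq // qprod0 invr1 add1n.
by have := qprod_gt0 (0 + N); rewrite -invr_gt0; lra.
Qed.

Lemma cantor_partial_cvg : cvgn (cantor_partial e).
Proof.
apply: nondecreasing_is_cvgn; first exact: cantor_partial_nondecreasing.
by exists 1 => _ [N _ <-]; exact: cantor_partial_le1.
Qed.

Lemma cantor_partial_le_sum N : cantor_partial e N <= cantor_sum e.
Proof.
apply: nondecreasing_cvgn_le; [exact: cantor_partial_nondecreasing | exact: cantor_partial_cvg].
Qed.

Lemma cantor_sum_le n : cantor_sum e <= cantor_partial e n.+1 + (qprod n)^-1.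
Proof.
apply: limr_le; first exact: cantor_partial_cvg.
exists n.+1 => // k /= nk; have := cantor_partial_tail n (k - n.+1).
rewrite subnKC //; have := qprod_gt0 (n + (k - n.+1)); rewrite -invr_gt0; lra.
Qed.

Lemma cantor_sum_le_gap n :
  cantor_sum e <= cantor_partial e n.+1 + (qprod n)^-1 - (qprod n.+1)^-1.
Proof.
apply: le_trans (cantor_sum_le n.+1) _; rewrite cantor_partialS //.
have := cantor_term_le (ltn0Sn n); have := qprod_telescope n.
have : 0 < (qprod n.+1)^-1 by rewrite invr_gt0 qprod_gt0.
rewrite !mulrBl mul1r; lra.
Qed.

End Digits.

Definition agree_upto n (e e' : nat -> int) := forall m, (0 < m <= n)%N -> e m = e' m.

Lemma agree_upto_partial e e' n : agree_upto n e e' ->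
  cantor_partial e n.+1 = cantor_partial e' n.+1.
Proof.
by move=> ee'; apply: eq_big_nat => m /andP[m1 mn]; rewrite ee' // m1 -ltnS.
Qed.

Lemma cantor_sum_ext e e' : (forall n, (0 < n)%N -> e n = e' n) ->
  cantor_sum e = cantor_sum e'.
Proof.
move=> ee'; rewrite /cantor_sum; congr (limn _); apply: funext => N.
by apply: eq_big_nat => n /andP[n1 _]; rewrite ee'.
Qed.

Lemma cantor_sum_dist e e' n : cantor_digits e -> cantor_digits e' ->
  agree_upto n e e' -> `|cantor_sum e - cantor_sum e'| <= (qprod n)^-1.
Proof.
move=> de de' /agree_upto_partial ee'.
have := cantor_partial_le_sum de n.+1; have := cantor_partial_le_sum de' n.+1.
have := cantor_sum_le de n; have := cantor_sum_le de' n.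
by rewrite ee' ler_norml; lra.
Qed.

Lemma cantor_sum_lt e e' n : cantor_digits e -> cantor_digits e' ->
  agree_upto n e e' -> e n.+1 < e' n.+1 -> cantor_sum e < cantor_sum e'.
Proof.
move=> de de' ee' lt.
have := cantor_sum_le_gap de n.+1; have := cantor_partial_le_sum de' n.+2.
rewrite (@cantor_partialS e n.+1) // (@cantor_partialS e' n.+1) //.
rewrite (agree_upto_partial ee').
have : ((e n.+1)%:~R + 1) / qprod n.+1 <= (e' n.+1)%:~R / qprod n.+1.
  by rewrite ler_pM2r ?invr_gt0 ?qprod_gt0 // -(intrD _ _ 1) ler_int; lia.
have : 0 < (qprod n.+2)^-1 by rewrite invr_gt0 qprod_gt0.
rewrite mulrDl mul1r; lra.
Qed.

Lemma cantor_sum_neq e e' n : cantor_digits e -> cantor_digits e' ->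
  agree_upto n e e' -> e n.+1 != e' n.+1 -> cantor_sum e != cantor_sum e'.
Proof.
move=> de de' ee'; rewrite neq_lt => /orP[lt|lt].
  by rewrite lt_eqF // (cantor_sum_lt de de' ee').
have e'e : agree_upto n e' e by move=> m /ee' ->.
by rewrite gt_eqF // (cantor_sum_lt de' de e'e).
Qed.

End CantorSeries.

Section SpecialWindow.
Variable R : realFieldType.

Lemma special_window_ub (A C Q y : R) : 2 <= A -> C <= A -> 2 * A ^+ 2 <= Q ->
  y <= (C - 1) / A + 1 / (2 * A ^+ 2) -> y * Q + 2 <= Q.
Proof.
move=> A2 CA AQ hy; set u := A^-1.
have u0 : 0 < u by rewrite invr_gt0; lra.
have uA : A * u = 1 by rewrite divff //; rewrite gt_eqF //; lra.
have u2 : u <= 1 / 2 by rewrite div1r lef_pV2 ?posrE //; lra.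
have Qu : 2 <= Q * (u * u).
  have : 2 * A ^+ 2 * (u * u) <= Q * (u * u) by rewrite ler_pM2r ?mulr_gt0.
  have -> : 2 * A ^+ 2 * (u * u) = 2 * ((A * u) * (A * u)) by ring.
  by rewrite uA !mulr1.
have e : 1 / (2 * A ^+ 2) = u * u / 2 by rewrite /u; field; rewrite gt_eqF //; lra.
have {e}hy : y <= 1 - u * u.
  have : (C - 1) * u <= (A - 1) * u by rewrite ler_pM2r //; lra.
  have : u * u <= u * (1 / 2) by rewrite ler_pM2l.
  rewrite [(A - 1) * u]mulrBl uA mul1r; rewrite e -/u in hy; lra.
have : y * Q <= (1 - u * u) * Q by rewrite ler_pM2r //; nra.
lra.
Qed.

Lemma special_window_lb (A C y : R) : 2 <= A -> 2 <= C ->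
  (C - 1) / A - 1 / (2 * A ^+ 2) <= y -> 0 < y.
Proof.
move=> A2 C2 hy; set u := A^-1.
have u0 : 0 < u by rewrite invr_gt0; lra.
have u2 : u <= 1 / 2 by rewrite div1r lef_pV2 ?posrE //; lra.
have e : 1 / (2 * A ^+ 2) = u * u / 2 by rewrite /u; field; rewrite gt_eqF //; lra.
have : u <= (C - 1) * u by rewrite ler_peMl //; lra.
have : u * u <= u * (1 / 2) by rewrite ler_pM2l.
rewrite e -/u in hy; lra.
Qed.

Lemma itv_shift (m r y d : R) : y \in `[m - r, m + r] -> 0 <= d -> d <= r ->
  y + d \in `[m - r, m + r] \/ y - d \in `[m - r, m + r].
Proof.
rewrite !in_itv /= => /andP[ly yu] d0 dr.
by case: (lerP (y + d) (m + r)) => h; [left | right]; apply/andP; split; lra.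
Qed.

End SpecialWindow.

Section SpecialDigits.
Variables (R : realType) (q : nat -> nat).
Hypotheses (q_basic : basic_seq q) (q_infinite : infinite_in_limit q).

Definition special_digit (t : nat * nat * nat) (x : int) : Prop :=
  let: (a, b, c) := t in
  if c == 1%N then x = 0
  else (x%:~R / (q (phi_Q q (a, b, c)))%:R : R)
         \in `[ (c - 1)%:R / a%:R - 1 / (2 * (a%:R) ^+ 2),
                (c - 1)%:R / a%:R + 1 / (2 * (a%:R) ^+ 2) ].

Lemma Q_specialE F : @Q_special R q F <-> forall t, S_Q q t -> special_digit t (F t).
Proof. by split => [sF [[a b] c] | sF a b c]; [exact: sF | exact: (sF (a, b, c))]. Qed.

Definition special_digits (e : nat -> int) :=
  forall n, (0 < n)%N -> special_digit (phi_inv q n) (e n).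

Lemma special_digit_bounds t d : S_Q q t -> special_digit t d ->
  0 <= d /\ d + 2 <= (q (phi_Q q t))%:Z.
Proof.
case: t => [[a b] c] St; have qa := q_phi_ge q_basic q_infinite St.
have q2 := q_basic (phi_Q_gt0 St); rewrite /special_digit.
set Q := q (phi_Q q (a, b, c)) in qa q2 *.
case: eqP => [_ -> | /eqP c1]; first by split => //; lia.
have [a1 _ c0 _ ca] := St; have c2 : (1 < c)%N by lia.
rewrite in_itv /= => /andP[lo hi].
have A2 : 2 <= a%:R :> R by rewrite (ler_nat R 2); lia.
have AQ : 2 * a%:R ^+ 2 <= Q%:R :> R by rewrite -natrX -(natrM R 2) ler_nat.
have Q0 : 0 < Q%:R :> R by rewrite ltr0n; lia.
rewrite natrB in lo hi; last by lia.
have := special_window_ub A2 (_ : c%:R <= a%:R) AQ hi; rewrite ler_nat => /(_ ca).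
have := special_window_lb A2 (_ : 2 <= c%:R) lo; rewrite (ler_nat R 2) => /(_ c2).
rewrite pmulr_lgt0 ?invr_gt0 // ltr0z divfK ?gt_eqF // => d0 dQ.
by split; [exact: ltW | rewrite -(ler_int R) intrD].
Qed.

Lemma special_digits_cantor e : special_digits e -> cantor_digits q e.
Proof.
move=> se m m0; have [St Ep] := phi_invP q m0.
by have := special_digit_bounds St (se m m0); rewrite Ep.
Qed.

Lemma special_digit_shift t d : S_Q q t -> t.2 != 1%N -> special_digit t d ->
  exists2 d', d' != d & special_digit t d'.
Proof.
case: t => [[a b] c] St /= c1; have qa := q_phi_ge q_basic q_infinite St.
have q2 := q_basic (phi_Q_gt0 St); rewrite /special_digit (negbTE c1).
set Q := q (phi_Q q (a, b, c)) in qa q2 *.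
have Q0 : 0 < Q%:R :> R by rewrite ltr0n; lia.
have A0 : 0 < 2 * a%:R ^+ 2 :> R by rewrite mulr_gt0 ?exprn_gt0 ?ltr0n //; case: St.
have AQ : 2 * a%:R ^+ 2 <= Q%:R :> R by rewrite -natrX -(natrM R 2) ler_nat.
have QA : Q%:R^-1 <= 1 / (2 * a%:R ^+ 2) :> R by rewrite div1r lef_pV2 ?posrE.
have Q'0 : 0 <= Q%:R^-1 :> R by rewrite invr_ge0 ltW.
move=> /itv_shift/(_ Q'0 QA) [h|h].
- exists (d + 1); first by rewrite -subr_eq0 addrAC subrr add0r.
  by rewrite intrD mulrDl (_ : 1%:~R = 1) // (mul1r Q%:R^-1).
- exists (d - 1); first by rewrite -subr_eq0 addrAC subrr sub0r oppr_eq0.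
  by rewrite intrB mulrBl (_ : 1%:~R = 1) // (mul1r Q%:R^-1).
Qed.

Lemma special_digits_update e n d : special_digits e ->
  special_digit (phi_inv q n) d -> special_digits [eta e with n |-> d].
Proof. by move=> se sd m m0 /=; case: eqP => [->|_] //; exact: se. Qed.

Lemma Theta_QE x : @Theta_Q R q x <-> exists2 e, special_digits e & x = cantor_sum R q e.
Proof.
split=> [[F [/Q_specialE sF ->]] | [e se ->]].
  by exists (E_F q F) => // n n0; apply: sF; have [] := phi_invP q n0.
exists (fun t => e (phi_Q q t)); split.
  by apply/Q_specialE => t St; have := se _ (phi_Q_gt0 St); rewrite phi_QK.
by apply: cantor_sum_ext => n n0; rewrite /E_F; have [_ ->] := phi_invP q n0.
Qed.

Lemma phi_inv_c_neq1_gt N : exists2 n, (N < n)%N & (phi_inv q n).2 != 1%N.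
Proof.
have St : S_Q q (N.+2, 1, 2)%N by split => //; exact: l_gt0.
exists (phi_Q q (N.+2, 1, 2)); last by rewrite phi_QK.
by have := phi_Q_bounds St; have := leq_Lsum_id q N.+1; rewrite /=; lia.
Qed.

End SpecialDigits.

Lemma closure_dist_le (R : realFieldType) (A : set R) (x z r : R) :
  closure A x -> (forall y, A y -> `|z - y| <= r) -> `|z - x| <= r.
Proof.
move=> clx Ar; apply/ler_addgt0Pr => eps eps0.
have [y [Ay xy]] := clx _ (nbhsx_ballx x eps eps0).
move: xy; rewrite -ball_normE /ball_ /= => xy.
by have := ler_distD y z x; have := Ar y Ay; rewrite distrC in xy; lra.
Qed.

Section ThetaClosed.
Variables (R : realType) (q : nat -> nat).
Hypotheses (q_basic : basic_seq q) (q_infinite : infinite_in_limit q).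

Definition prefix_set n (p : nat -> int) : set R :=
  [set cantor_sum R q e | e in [set e | special_digits R q e /\ agree_upto n p e]].

Lemma agree_uptoS n p d e : agree_upto n.+1 [eta p with n.+1 |-> d] e <->
  agree_upto n p e /\ d = e n.+1.
Proof.
split=> [pe | [pe ->] m /andP[m0 mn]].
  split; last by have := pe n.+1; rewrite /= eqxx; apply.
  move=> m /andP[m0 mn]; have := pe m; rewrite /= m0 (leqW mn) ifN_eq; first by apply.
  by rewrite ltn_eqF.
by rewrite /=; case: eqP => [->|/eqP mn'] //; apply: pe; rewrite m0 /=; lia.
Qed.

(* Position [n.+1] admits only the finitely many digits below [q n.+1], and
   closure commutes with finite unions. *)
Lemma closure_prefix_setS x n p : closure (prefix_set n p) x ->
  exists d, closure (prefix_set n.+1 [eta p with n.+1 |-> d]) x.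
Proof.
pose B k := [set cantor_sum R q e | e in
  [set e | [/\ special_digits R q e, agree_upto n p e & e n.+1 < k%:Z]]].
suff Bk k : closure (B k) x -> exists d, closure (prefix_set n.+1 [eta p with n.+1 |-> d]) x.
  move=> cl; apply: (Bk (q n.+1)); move: cl; apply: closureS => _ [e [se pe] <-].
  exists e => //; split => //.
  by have [_] := special_digits_cantor q_basic q_infinite se (ltn0Sn n); lia.
elim: k => [|k IH].
  suff -> : B 0%N = set0 by rewrite closure0.
  apply/seteqP; split => // y [e [se _ lt0] _].
  by have [] := special_digits_cantor q_basic q_infinite se (ltn0Sn n); lia.
have : B k.+1 `<=` B k `|` prefix_set n.+1 [eta p with n.+1 |-> k%:Z].
  move=> _ [e [se pe ek] <-]; have [ek'|ek'] := ltP (e n.+1) k%:Z.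
    by left; exists e.
  by right; exists e => //; split => //; apply/agree_uptoS; split => //; lia.
by move=> /closureS/[apply]; rewrite closureU => -[/IH|]; last exists k%:Z.
Qed.

Variable x : R.
Hypothesis x_closure : closure (@Theta_Q R q) x.

Fixpoint prefix k : nat -> int :=
  if k is k'.+1 then
    let p := prefix k' in
    [eta p with k |-> xget 0 [set d | closure (prefix_set k [eta p with k |-> d]) x]]
  else fun=> 0.

Lemma closure_prefix k : closure (prefix_set k (prefix k)) x.
Proof.
elim: k => [|k IH]; last exact: xgetPex (closure_prefix_setS IH).
apply: closureS x_closure => y /Theta_QE [e se ->].
by exists e => //; split => // m; lia.
Qed.

Lemma prefix_stable m j : prefix (m + j) m = prefix m m.
Proof. by elim: j => [|j IH]; rewrite ?addn0 // addnS /= ifN_eq ?IH //; lia. Qed.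

Definition limit_digits m := prefix m m.

Lemma agree_upto_limit_digits n : agree_upto n (prefix n) limit_digits.
Proof. by move=> m /andP[_ mn]; rewrite /limit_digits -(subnKC mn) prefix_stable. Qed.

Lemma limit_digits_special : special_digits R q limit_digits.
Proof.
move=> m m0; have : prefix_set m (prefix m) !=set0.
  by apply/set0P/negP => /eqP A0; have := closure_prefix m; rewrite A0 closure0.
by case=> _ [e [se pe] _]; rewrite /limit_digits pe ?m0 ?leqnn //; exact: se.
Qed.

Lemma cantor_sum_limit_digits : cantor_sum R q limit_digits = x.
Proof.
have dl := special_digits_cantor q_basic q_infinite limit_digits_special.
have near N : `|cantor_sum R q limit_digits - x| <= (qprod R q N)^-1.
  apply: closure_dist_le (closure_prefix N) _ => _ [e [se pe] <-].
  apply: (cantor_sum_dist R q_basic dl (special_digits_cantor q_basic q_infinite se)).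
  by move=> m mN; rewrite -pe // agree_upto_limit_digits.
apply/eqP; rewrite -subr_eq0 -normr_le0; apply/ler_addgt0Pr => eps eps0.
have [N HN] := qprod_inv_lt q_basic eps0.
by rewrite add0r; apply: le_trans (near N) (ltW (HN N _)).
Qed.

End ThetaClosed.

Lemma Theta_Q_closed (R : realType) q : basic_seq q -> infinite_in_limit q ->
  closed (@Theta_Q R q).
Proof.
move=> q_basic q_infinite x clx; apply/Theta_QE.
exists (limit_digits q x); first exact: limit_digits_special clx.
by rewrite (cantor_sum_limit_digits q_basic q_infinite clx).
Qed.

Lemma Theta_Q_limit_point (R : realType) q : basic_seq q -> infinite_in_limit q ->
  @Theta_Q R q `<=` limit_point (@Theta_Q R q).
Proof.
move=> q_basic q_infinite _ /Theta_QE [e se ->] U /nbhs_ballP [eps /= eps0 epsU].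
have [N HN] := qprod_inv_lt q_basic eps0.
have [[|n] Nn c1] := phi_inv_c_neq1_gt q N; first by [].
have [St _] := phi_invP q (ltn0Sn n).
have [d' d'e sd'] := special_digit_shift q_basic q_infinite St c1 (se _ (ltn0Sn n)).
pose e' := [eta e with n.+1 |-> d']; have se' := special_digits_update se sd'.
have ee' : agree_upto n e e' by move=> m /andP[_ mn] /=; rewrite ifN_eq //; lia.
have de := special_digits_cantor q_basic q_infinite se.
have de' := special_digits_cantor q_basic q_infinite se'.
exists (cantor_sum R q e'); split.
- by rewrite eq_sym (cantor_sum_neq R q_basic de de' ee') //= eqxx eq_sym.
- by apply/Theta_QE; exists e'.
- apply: epsU; rewrite -ball_normE /ball_ /=.
  exact: le_lt_trans (cantor_sum_dist R q_basic de de' ee') (HN n _).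
Qed.

Theorem mainTheorem3 (R : realType) (q : nat -> nat) :
  basic_seq q -> infinite_in_limit q -> perfect_set (@Theta_Q R q).
Proof.
move=> q_basic q_infinite; split; first exact: Theta_Q_closed.
apply/seteqP; split; last exact: Theta_Q_limit_point.
by move=> x /subset_limit_point/(Theta_Q_closed q_basic q_infinite).
Qed.
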